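(* Let $f:(L',\alpha_{L'})\to(L,\alpha_L)$ be an $\alpha$-cover and let $C=\mathfrak{uce}_\alpha(f)(\mathrm{Ker}\,U_{\alpha'})\subseteq\mathfrak{uce}_\alpha(L)$. For any $h\in\mathrm{Aut}(L,\alpha_L)$ there exists $\theta_h\in\mathrm{Aut}(L',\alpha_{L'})$ with $f\circ\theta_h=h\circ f$ if and only if the automorphism $\mathfrak{uce}_\alpha(h)$ of $\mathfrak{uce}_\alpha(L)$ satisfies $\mathfrak{uce}_\alpha(h)(C)=C$. In that case $\theta_h$ is uniquely determined by $f\circ\theta_h=h\circ f$ and $\theta_h(\mathrm{Ker}\,f)=\mathrm{Ker}\,f$. Moreover the map $\Theta:\{h\in\mathrm{Aut}(L,\alpha_L):\mathfrak{uce}_\alpha(h)(C)=C\}\to\{g\in\mathrm{Aut}(L',\alpha_{L'}):g(\mathrm{Ker}\,f)=\mathrm{Ker}\,f\}$, $h\mapsto\theta_h$, is a group isomorphism.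
   Context: Hom-Leibniz algebras are multiplicative: $(L,\alpha_L)$ is a $\mathbb{K}$-vector space with bilinear bracket and linear $\alpha_L$ such that $[\alpha_L(x),[y,z]]=[[x,y],\alpha_L(z)]-[[x,z],\alpha_L(y)]$ and $\alpha_L[x,y]=[\alpha_L(x),\alpha_L(y)]$; homomorphisms preserve brackets and commute with structure maps; $\mathrm{Aut}(L,\alpha_L)$ is the group of bijective homomorphisms $L\to L$. $Z(K)=\{x:[x,y]=0=[y,x]\ \forall y\}$. $(L,\alpha_L)$ is $\alpha$-perfect if $L=[\alpha_L(L),\alpha_L(L)]$. A central extension is a surjective homomorphism $\pi$ with $\mathrm{Ker}\,\pi\subseteq Z(K)$. An $\alpha$-cover is a central extension $f:(L',\alpha_{L'})\to(L,\alpha_L)$ with $(L',\alpha_{L'})$ $\alpha$-perfect (then $L$ is $\alpha$-perfect too). For $\alpha$-perfect $(L,\alpha_L)$: $I_L\subseteq\alpha_L(L)\otimes\alpha_L(L)$ is spanned by $-[x_1,x_2]\otimes\alpha_L(x_3)+[x_1,x_3]\otimes\alpha_L(x_2)+\alpha_L(x_1)\otimes[x_2,x_3]$; $\mathfrak{uce}_\alpha(L)=(\alpha_L(L)\otimes\alpha_L(L))/I_L$ with classes $\{\alpha_L(x_1),\alpha_L(x_2)\}$, bracket $[\{a,b\},\{c,e\}]=\{[a,b],[c,e]\}$, endomorphism $\overline{\alpha}\{\alpha_L(x_1),\alpha_L(x_2)\}=\{\alpha_L^2(x_1),\alpha_L^2(x_2)\}$, and $U_\alpha:\mathfrak{uce}_\alpha(L)\to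 L$, $U_\alpha\{a,b\}=[a,b]$ (the universal $\alpha$-central extension of $L$); $U_{\alpha'}$ is the same for $L'$. For a homomorphism $g$ of $\alpha$-perfect algebras, $\mathfrak{uce}_\alpha(g)\{\alpha(x_1),\alpha(x_2)\}=\{\alpha(g(x_1)),\alpha(g(x_2))\}$. *)

From HB Require Import structures.
From mathcomp Require Import all_boot all_order all_algebra.
From Stdlib Require List.
Set Implicit Arguments. Unset Strict Implicit. Unset Printing Implicit Defensive.
Import GRing.Theory.
Local Open Scope ring_scope.

Section HomLeibnizDefs.
Variable K : fieldType.

Record HomLeibniz (V : lmodType K) (br : V -> V -> V) (al : V -> V) : Prop := {
  hl_brl : forall (k : K) x y z, br (k *: x + y) z = k *: br x z + br y z;
  hl_brr : forall (k : K) x y z, br z (k *: x + y) = k *: br z x + br z y;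
  hl_al_lin : forall (k : K) x y, al (k *: x + y) = k *: al x + al y;
  hl_leibniz : forall x y z,
      br (al x) (br y z) = br (br x y) (al z) - br (br x z) (al y);
  hl_mult : forall x y, al (br x y) = br (al x) (al y) }.

Definition is_hom (V W : lmodType K) (brV : V -> V -> V) (alV : V -> V)
    (brW : W -> W -> W) (alW : W -> W) (f : V -> W) : Prop :=
  [/\ forall (k : K) x y, f (k *: x + y) = k *: f x + f y,
      forall x y, f (brV x y) = brW (f x) (f y) &
      forall x, f (alV x) = alW (f x)].

Definition is_aut (V : lmodType K) (br : V -> V -> V) (al : V -> V) (g : V -> V) :=
  is_hom br al br al g /\ bijective g.

Definition in_center (V : lmodType K) (br : V -> V -> V) (x : V) : Prop :=
  forall y, br x y = 0 /\ br y x = 0.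

Definition alpha_perfect (V : lmodType K) (br : V -> V -> V) (al : V -> V) : Prop :=
  forall x : V, exists s : seq (K * V * V),
    x = \sum_(e <- s) e.1.1 *: br (al e.1.2) (al e.2).

Definition central_extension (V W : lmodType K) brV alV brW alW (f : V -> W) :=
  [/\ is_hom brV alV brW alW f,
      forall y : W, exists x : V, f x = y &
      forall x : V, f x = 0 -> in_center brV x].

Definition alpha_cover (V W : lmodType K) brV alV brW alW (f : V -> W) :=
  central_extension brV alV brW alW f /\ alpha_perfect brV alV.

(* ---- uce_alpha(L) = (al(L) (x) al(L)) / I_L ----
   An element of the free K-vector space on V x V is represented by a finite
   formal sum [:: (c, a, b); ...] meaning sum c.(a,b).  The tensor product
   V (x) V is the free space modulo the bilinearity relations; al(L)(x)al(L)
   is the subspace spanned by a (x) b with a, b in al(L) (over a field it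
   embeds in V (x) V).  uce_alpha(L) is obtained by further quotienting by I_L. *)
Definition tcoef (V : lmodType K) (s : seq (K * V * V)) (a b : V) : K :=
  \sum_(e <- s | (e.1.2 == a) && (e.2 == b)) e.1.1.

Definition tscale (V : lmodType K) (k : K) (s : seq (K * V * V)) : seq (K * V * V) :=
  [seq (k * e.1.1, e.1.2, e.2) | e <- s].

Definition tsub (V : lmodType K) (s t : seq (K * V * V)) : seq (K * V * V) :=
  s ++ tscale (-1) t.

Definition tmap (V W : lmodType K) (g : V -> W) (s : seq (K * V * V)) : seq (K * W * W) :=
  [seq (e.1.1, g e.1.2, g e.2) | e <- s].

(* generators of the subspace (bilinearity relations) + I_L *)
Definition rel_gen (V : lmodType K) (br : V -> V -> V) (al : V -> V)
    (r : seq (K * V * V)) : Prop :=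
  (exists a a' b, r = [:: (1, a + a', b); (-1, a, b); (-1, a', b)]) \/
  (exists a b b', r = [:: (1, a, b + b'); (-1, a, b); (-1, a, b')]) \/
  (exists (k : K) a b, r = [:: (1, k *: a, b); (- k, a, b)]) \/
  (exists (k : K) a b, r = [:: (1, a, k *: b); (- k, a, b)]) \/
  (exists x1 x2 x3, r = [:: (-1, br x1 x2, al x3); (1, br x1 x3, al x2);
                             (1, al x1, br x2 x3)]).

Definition in_rel (V : lmodType K) (br : V -> V -> V) (al : V -> V)
    (s : seq (K * V * V)) : Prop :=
  exists rs : seq (K * seq (K * V * V)),
    (forall p, Stdlib.Lists.List.In p rs -> rel_gen br al p.2) /\
    tcoef s =2 tcoef (flatten [seq tscale p.1 p.2 | p <- rs]).

Definition uce_eq (V : lmodType K) (br : V -> V -> V) (al : V -> V)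
    (s t : seq (K * V * V)) : Prop := in_rel br al (tsub s t).

(* formal sums representing elements of al(L) (x) al(L) *)
Definition in_uce (V : lmodType K) (al : V -> V) (s : seq (K * V * V)) : Prop :=
  forall e, Stdlib.Lists.List.In e s -> (exists x, e.1.2 = al x) /\ (exists y, e.2 = al y).

(* representatives of elements of Ker U_alpha, U_alpha{a,b} = [a,b] *)
Definition in_ker_U (V : lmodType K) (br : V -> V -> V) (al : V -> V)
    (s : seq (K * V * V)) : Prop :=
  in_uce al s /\ \sum_(e <- s) e.1.1 *: br e.1.2 e.2 = 0.

(* uce_alpha(h)(C) = C, where C = uce_alpha(f)(Ker U_alpha') ;
   on classes uce_alpha(g){a,b} = {g a, g b} since g commutes with al. *)
Definition uce_stable (V W : lmodType K) brV alV brW alW (f : V -> W) (h : W -> W) :=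
  (forall s, in_ker_U brV alV s ->
     exists t, in_ker_U brV alV t /\ uce_eq brW alW (tmap h (tmap f s)) (tmap f t)) /\
  (forall t, in_ker_U brV alV t ->
     exists s, in_ker_U brV alV s /\ uce_eq brW alW (tmap f t) (tmap h (tmap f s))).

Definition preserves_ker (V W : lmodType K) (f : V -> W) (g : V -> V) : Prop :=
  (forall x, f x = 0 -> f (g x) = 0) /\
  (forall y, f y = 0 -> exists x, f x = 0 /\ g x = y).

End HomLeibnizDefs.

From HB Require Import structures.
From mathcomp Require Import all_boot all_order all_algebra.
From Stdlib Require Import ClassicalEpsilon.
Set Implicit Arguments. Unset Strict Implicit. Unset Printing Implicit Defensive.
Import GRing.Theory.
Local Open Scope ring_scope.

(* An element of uce_alpha(L) is represented by a formal sum s = sum c (a, b);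
   for a pairing F the evaluation  fseval F s = sum c F a b  is well defined on
   classes as soon as F is bilinear and kills the generators of I_L.
   Since Ker f is central, the bracket of L' descends to a bilinear map
   lbr : L x L -> L' with lbr (f u) (f v) = [u, v].  For an endomorphism g of L
   the pairing (a, b) |-> lbr (g a) (g b) kills I_L by the Hom-Leibniz identity.
   If it also vanishes on Ker U_alpha' (pushed forward by f), alpha-perfectness
   of L' yields a homomorphism theta_g lifting g: write x = sum c [al' a, al' b]
   and set theta_g x = sum c lbr (g (f (al' a))) (g (f (al' b))).
   The condition uce_alpha(h)(C) = C gives this vanishing for h and h^-1, so
   theta_h is an automorphism; conversely any lift transports formal sums and
   proves the stability.  Lifts are unique since L' is alpha-perfect and
   brackets only see classes modulo the central Ker f.  Finally h |-> theta_h is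
   multiplicative by uniqueness, injective because f is onto, and onto because
   an automorphism of L' preserving Ker f descends along f. *)

Section LinearFacts.
Variables (K : fieldType) (U M : lmodType K) (h : U -> M).
Hypothesis h_lin : linear h.

Lemma lin0 : h 0 = 0.
Proof.
have := h_lin 1 0 0; rewrite scaler0 addr0 scale1r => E.
by apply: (addrI (h 0)); rewrite addr0 -E.
Qed.

Lemma linD x y : h (x + y) = h x + h y.
Proof. by have := h_lin 1 x y; rewrite !scale1r. Qed.

Lemma linZ k x : h (k *: x) = k *: h x.
Proof. by have := h_lin k x 0; rewrite !addr0 lin0 addr0. Qed.

Lemma linB x y : h (x - y) = h x - h y.
Proof. by rewrite linD -scaleN1r linZ scaleN1r. Qed.

End LinearFacts.

Section FormalSums.
Variable K : fieldType.

Definition fseval (U M : lmodType K) (F : U -> U -> M) (s : seq (K * U * U)) : M :=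
  \sum_(e <- s) e.1.1 *: F e.1.2 e.2.

Section Eval.
Variables (U M : lmodType K) (F : U -> U -> M).

Lemma fseval_nil : fseval F [::] = 0.
Proof. by rewrite /fseval big_nil. Qed.

Lemma fseval_cons e s : fseval F (e :: s) = e.1.1 *: F e.1.2 e.2 + fseval F s.
Proof. by rewrite /fseval big_cons. Qed.

Lemma fseval_cat s t : fseval F (s ++ t) = fseval F s + fseval F t.
Proof. by rewrite /fseval big_cat. Qed.

Lemma fseval_tscale k s : fseval F (tscale k s) = k *: fseval F s.
Proof.
rewrite /fseval /tscale big_map scaler_sumr; apply: eq_bigr => e _ /=.
by rewrite scalerA.
Qed.

Lemma fseval_tsub s t : fseval F (tsub s t) = fseval F s - fseval F t.
Proof. by rewrite /tsub fseval_cat fseval_tscale scaleN1r. Qed.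

Lemma fseval_ext (G : U -> U -> M) s :
  (forall a b, F a b = G a b) -> fseval F s = fseval G s.
Proof. by move=> E; apply: eq_bigr => e _; rewrite E. Qed.

Lemma fseval_regroup s (P : seq (U * U)) : uniq P ->
  {subset [seq (e.1.2, e.2) | e <- s] <= P} ->
  fseval F s = \sum_(p <- P) tcoef s p.1 p.2 *: F p.1 p.2.
Proof.
move=> uP; elim: s => [|e s IH] sub.
  rewrite fseval_nil; apply/esym/big1 => p _.
  by rewrite /tcoef big_nil scale0r.
have eP : (e.1.2, e.2) \in P by apply: sub; rewrite inE eqxx.
rewrite fseval_cons IH; last by move=> q qs; apply: sub; rewrite inE qs orbT.
rewrite (bigD1_seq (e.1.2, e.2)) //= [RHS](bigD1_seq (e.1.2, e.2)) //=.
rewrite /tcoef big_cons /= !eqxx /= scalerDl addrA.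
congr (_ + _); apply: eq_bigr => -[a b] /= pe; rewrite big_cons.
by case: ifP => // /andP[/eqP Ea /eqP Eb]; subst a b; rewrite eqxx in pe.
Qed.

(* Hence the evaluation only depends on the coefficient function tcoef s,
   i.e. on the element of the free vector space that s represents. *)
Lemma fseval_tcoef s t : tcoef s =2 tcoef t -> fseval F s = fseval F t.
Proof.
move=> E; set P := undup ([seq (e.1.2, e.2) | e <- s] ++ [seq (e.1.2, e.2) | e <- t]).
have uP : uniq P by apply: undup_uniq.
rewrite (@fseval_regroup s P) //; last by move=> q qs; rewrite mem_undup mem_cat qs.
rewrite (@fseval_regroup t P) //; last by move=> q qt; rewrite mem_undup mem_cat qt orbT.
by apply: eq_bigr => p _; rewrite E.
Qed.

Variables (br : U -> U -> U) (al : U -> U).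
Hypotheses (F_linl : forall w, linear (F ^~ w)) (F_linr : forall w, linear (F w)).
Hypothesis F_IL : forall x1 x2 x3,
  - F (br x1 x2) (al x3) + F (br x1 x3) (al x2) + F (al x1) (br x2 x3) = 0.

Lemma fseval_rel_gen r : rel_gen br al r -> fseval F r = 0.
Proof.
case=> [[a [a' [b ->]]]|[[a [b [b' ->]]]|[[k [a [b ->]]]|[[k [a [b ->]]]|[x1 [x2 [x3 ->]]]]]]];
  rewrite !fseval_cons fseval_nil /= addr0.
- by rewrite (linD (F_linl b)) scale1r !scaleN1r -opprD subrr.
- by rewrite (linD (F_linr a)) scale1r !scaleN1r -opprD subrr.
- by rewrite (linZ (F_linl b)) scale1r scaleNr subrr.
- by rewrite (linZ (F_linr a)) scale1r scaleNr subrr.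
- by rewrite !scale1r scaleN1r addrA.
Qed.

Lemma fseval_uce_eq s t : uce_eq br al s t -> fseval F s = fseval F t.
Proof.
move=> [rs [Hrs /fseval_tcoef E]]; apply/eqP; rewrite -subr_eq0 -fseval_tsub E.
elim: rs Hrs {E} => [|p rs IH] Hrs /=; first by rewrite fseval_nil.
rewrite fseval_cat fseval_tscale fseval_rel_gen ?scaler0 ?add0r; last by apply: Hrs; left.
by apply: IH => q Hq; apply: Hrs; right.
Qed.

End Eval.

Lemma linear_fseval (U M N : lmodType K) (F : U -> U -> M) (h : M -> N) s :
  linear h -> h (fseval F s) = fseval (fun a b => h (F a b)) s.
Proof.
move=> h_lin; elim: s => [|e s IH]; first by rewrite !fseval_nil (lin0 h_lin).
by rewrite !fseval_cons (linD h_lin) (linZ h_lin) IH.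
Qed.

Lemma fseval_tmap (U U' M : lmodType K) (F : U' -> U' -> M) (g : U -> U') s :
  fseval F (tmap g s) = fseval (fun a b => F (g a) (g b)) s.
Proof. by rewrite /fseval /tmap big_map. Qed.

Lemma uce_eq_refl (U : lmodType K) (br : U -> U -> U) (al : U -> U) s :
  uce_eq br al s s.
Proof.
exists [::]; split => // a b.
by rewrite /tcoef /tsub /tscale big_cat big_map /= -mulr_sumr mulN1r subrr big_nil.
Qed.

Section InUce.
Variables (U : lmodType K) (al : U -> U).

Lemma in_uce_cons e s :
  in_uce al (e :: s) <-> ((exists x, e.1.2 = al x) /\ (exists y, e.2 = al y)) /\ in_uce al s.
Proof.
split => [H|[He Hs] e' /= [<-|He'] //]; last exact: Hs.
by split=> [|e' He']; apply: H; [left|right].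
Qed.

Lemma in_uce_cat s t : in_uce al s -> in_uce al t -> in_uce al (s ++ t).
Proof.
elim: s => [|e s IH] //= /in_uce_cons[He Hs] Ht.
by apply/in_uce_cons; split => //; apply: IH.
Qed.

Lemma in_uce_tscale k s : in_uce al s -> in_uce al (tscale k s).
Proof.
elim: s => [|e s IH] //= /in_uce_cons[He Hs].
by apply/in_uce_cons; split => //; apply: IH.
Qed.

Lemma in_uce_tmap g s :
  (forall x, exists y, g (al x) = al y) -> in_uce al s -> in_uce al (tmap g s).
Proof.
move=> Hg; elim: s => [|e s IH] //= /in_uce_cons[[[x Hx] [y Hy]] Hs].
by apply/in_uce_cons; split; [rewrite /= Hx Hy; split; apply: Hg | apply: IH].
Qed.

Lemma in_uce_tmap_al s : in_uce al (tmap al s).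
Proof.
elim: s => [|e s IH] //=; apply/in_uce_cons.
by split => //; split; [exists e.1.2 | exists e.2].
Qed.

End InUce.
End FormalSums.

Section Automorphisms.
Variables (K : fieldType) (U : lmodType K) (br : U -> U -> U) (al : U -> U).

Lemma hom_id : is_hom br al br al id.
Proof. by split. Qed.

Lemma hom_comp g1 g2 : is_hom br al br al g1 -> is_hom br al br al g2 ->
  is_hom br al br al (g1 \o g2).
Proof. by move=> [l1 b1 a1] [l2 b2 a2]; split => * /=; rewrite ?l2 ?l1 ?b2 ?b1 ?a2 ?a1. Qed.

Lemma aut_comp g1 g2 : is_aut br al g1 -> is_aut br al g2 -> is_aut br al (g1 \o g2).
Proof. by move=> [h1 b1] [h2 b2]; split; [apply: hom_comp | apply: bij_comp]. Qed.

Lemma aut_inverse h : is_aut br al h ->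
  exists hinv, [/\ is_hom br al br al hinv, cancel h hinv & cancel hinv h].
Proof.
move=> [[l b a] [hinv c1 c2]]; exists hinv; split => //; split.
- by move=> k x y; rewrite -{1}(c2 x) -{1}(c2 y) -l c1.
- by move=> x y; rewrite -{1}(c2 x) -{1}(c2 y) -b c1.
- by move=> x; rewrite -{1}(c2 x) -a c1.
Qed.

End Automorphisms.

Section Cover.
Variables (K : fieldType) (V W : lmodType K) (brV : V -> V -> V) (alV : V -> V)
  (brW : W -> W -> W) (alW : W -> W) (f : V -> W).
Hypotheses (HV : HomLeibniz brV alV) (Hc : alpha_cover brV alV brW alW f).

Definition lifts (th : V -> V) (h : W -> W) := forall x, f (th x) = h (f x).

Let f_hom : is_hom brV alV brW alW f. Proof. by case: Hc => [[]]. Qed.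
Let f_lin : linear f. Proof. by case: f_hom. Qed.
Let f_br x y : f (brV x y) = brW (f x) (f y). Proof. by case: f_hom. Qed.
Let f_al x : f (alV x) = alW (f x). Proof. by case: f_hom. Qed.
Let f_onto w : exists x, f x = w. Proof. by case: Hc => [[_ H _] _]; apply: H. Qed.
Let ker_central x : f x = 0 -> in_center brV x.
Proof. by case: Hc => [[_ _ H] _]; apply: H. Qed.
Let V_perfect : alpha_perfect brV alV. Proof. by case: Hc. Qed.
Let br_linl z : linear (brV ^~ z). Proof. by move=> k x y; apply: (hl_brl HV). Qed.
Let br_linr z : linear (brV z). Proof. by move=> k x y; apply: (hl_brr HV). Qed.
Let al_lin : linear alV. Proof. by move=> k x y; apply: (hl_al_lin HV). Qed.

(* Brackets in L' only depend on the classes modulo the central ideal Ker f. *)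
Lemma br_mod_ker u1 u1' u2 u2' :
  f u1 = f u1' -> f u2 = f u2' -> brV u1 u2 = brV u1' u2'.
Proof.
move=> E1 E2.
have /ker_central z1 : f (u1 - u1') = 0 by rewrite (linB f_lin) E1 subrr.
have /ker_central z2 : f (u2 - u2') = 0 by rewrite (linB f_lin) E2 subrr.
rewrite -(subrK u1' u1) -(subrK u2' u2) (linD (br_linl _)) (linD (br_linr u1')).
by rewrite (proj1 (z1 _)) (proj2 (z2 _)) !add0r.
Qed.

Definition lift (w : W) : V := proj1_sig (constructive_indefinite_description _ (f_onto w)).

Lemma liftK w : f (lift w) = w.
Proof. exact: proj2_sig (constructive_indefinite_description _ (f_onto w)). Qed.

Definition lbr (w1 w2 : W) : V := brV (lift w1) (lift w2).

Lemma lbrE u1 u2 w1 w2 : f u1 = w1 -> f u2 = w2 -> lbr w1 w2 = brV u1 u2.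
Proof. by move=> E1 E2; apply: br_mod_ker; rewrite liftK. Qed.

Lemma f_lbr w1 w2 : f (lbr w1 w2) = brW w1 w2.
Proof. by rewrite f_br !liftK. Qed.

Lemma lbr_linl w : linear (lbr ^~ w).
Proof.
move=> k a b /=; rewrite (@lbrE (k *: lift a + lift b) (lift w)) ?liftK //.
  exact: br_linl.
by rewrite f_lin !liftK.
Qed.

Lemma lbr_linr w : linear (lbr w).
Proof.
move=> k a b /=; rewrite (@lbrE (lift w) (k *: lift a + lift b)) ?liftK //.
  exact: br_linr.
by rewrite f_lin !liftK.
Qed.

Lemma al_lbr w1 w2 : alV (lbr w1 w2) = lbr (alW w1) (alW w2).
Proof. by rewrite (hl_mult HV) (@lbrE (alV (lift w1)) (alV (lift w2))) // f_al liftK. Qed.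

Definition perf_rep (x : V) : seq (K * V * V) :=
  proj1_sig (constructive_indefinite_description _ (V_perfect x)).

Lemma perf_repE x : fseval brV (tmap alV (perf_rep x)) = x.
Proof.
rewrite fseval_tmap; symmetry.
exact: proj2_sig (constructive_indefinite_description _ (V_perfect x)).
Qed.

(* In particular al' is onto, since al'[a, b] = [al' a, al' b]. *)
Lemma al_onto x : exists y, x = alV y.
Proof.
exists (fseval brV (perf_rep x)).
rewrite (linear_fseval _ _ al_lin) -{1}(perf_repE x) fseval_tmap.
by apply: fseval_ext => a b; rewrite (hl_mult HV).
Qed.

Lemma hom_unique t1 t2 :
  is_hom brV alV brV alV t1 -> is_hom brV alV brV alV t2 ->
  (forall x, f (t1 x) = f (t2 x)) -> t1 =1 t2.
Proof.
move=> [l1 b1 a1] [l2 b2 a2] E x.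
rewrite -(perf_repE x) fseval_tmap (linear_fseval _ _ l1) (linear_fseval _ _ l2).
apply: fseval_ext => a b; rewrite b1 b2 a1 a2 a1 a2.
by apply: br_mod_ker; rewrite !f_al E.
Qed.

Definition geval (g : W -> W) (s : seq (K * V * V)) : V :=
  fseval (fun a b => lbr (g (f a)) (g (f b))) s.

Definition theta (g : W -> W) (x : V) : V := geval g (tmap alV (perf_rep x)).

Definition kills_kerU (g : W -> W) := forall t, in_ker_U brV alV t -> geval g t = 0.

Lemma theta_eval g s : kills_kerU g -> in_uce alV s -> theta g (fseval brV s) = geval g s.
Proof.
move=> Hg Hs; set r := tmap alV (perf_rep (fseval brV s)).
have Hd : in_ker_U brV alV (tsub s r).
  split; first by apply: in_uce_cat => //; apply/in_uce_tscale/in_uce_tmap_al.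
  by have := fseval_tsub brV s r; rewrite perf_repE subrr.
by have := Hg _ Hd; rewrite /geval fseval_tsub => /eqP; rewrite subr_eq0 => /eqP.
Qed.

Section Theta.
Variable g : W -> W.
Hypotheses (g_hom : is_hom brW alW brW alW g) (g_kills : kills_kerU g).

(* theta g lifts g (this needs no well-definedness). *)
Lemma theta_lifts : lifts (theta g) g.
Proof.
case: g_hom => g_lin g_br _ x.
rewrite /theta /geval (linear_fseval _ _ f_lin) -{2}(perf_repE x).
rewrite (linear_fseval _ _ f_lin) (linear_fseval _ _ g_lin).
by apply: fseval_ext => a b; rewrite f_lbr f_br g_br.
Qed.

Lemma theta_lin : linear (theta g).
Proof.
move=> k x y.
have -> : k *: x + y = fseval brV (tscale k (tmap alV (perf_rep x)) ++ tmap alV (perf_rep y)).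
  by rewrite fseval_cat fseval_tscale !perf_repE.
rewrite theta_eval //; last exact/in_uce_cat/in_uce_tmap_al/in_uce_tscale/in_uce_tmap_al.
by rewrite /geval fseval_cat fseval_tscale.
Qed.

Lemma theta_br x y : theta g (brV x y) = brV (theta g x) (theta g y).
Proof.
have [x' ->] := al_onto x; have [y' ->] := al_onto y.
have -> : brV (alV x') (alV y') = fseval brV [:: (1, alV x', alV y')].
  by rewrite fseval_cons fseval_nil addr0 scale1r.
rewrite theta_eval //; last by apply/in_uce_cons; split => //; split; eexists.
rewrite /geval fseval_cons fseval_nil addr0 scale1r /=.
by apply: lbrE; rewrite theta_lifts.
Qed.

Lemma theta_al x : theta g (alV x) = alV (theta g x).
Proof.
case: g_hom => _ _ g_al.
have -> : alV x = fseval brV (tmap alV (tmap alV (perf_rep x))).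
  rewrite -{1}(perf_repE x) (linear_fseval _ _ al_lin) !fseval_tmap.
  by apply: fseval_ext => a b; rewrite (hl_mult HV).
rewrite theta_eval //; last by apply/in_uce_tmap/in_uce_tmap_al => z; exists (alV z).
rewrite /theta /geval (linear_fseval _ _ al_lin) fseval_tmap.
by apply: fseval_ext => a b; rewrite al_lbr !f_al !g_al.
Qed.

Lemma theta_hom : is_hom brV alV brV alV (theta g).
Proof. by split; [exact: theta_lin | exact: theta_br | exact: theta_al]. Qed.

End Theta.

(* For an endomorphism g of L, the pairing (a, b) |-> lbr (g a) (g b) kills
   I_L: this is where the Hom-Leibniz identity of L' enters. *)
Lemma lbr_uce_eq g s t : is_hom brW alW brW alW g -> uce_eq brW alW s t ->
  fseval (fun a b => lbr (g a) (g b)) s = fseval (fun a b => lbr (g a) (g b)) t.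
Proof.
move=> [g_lin g_br g_al]; apply: fseval_uce_eq.
- by move=> w k a b /=; rewrite g_lin; apply: lbr_linl.
- by move=> w k a b /=; rewrite g_lin; apply: lbr_linr.
move=> x1 x2 x3; set u1 := lift (g x1); set u2 := lift (g x2); set u3 := lift (g x3).
have [P1 P2 P3] : [/\ f u1 = g x1, f u2 = g x2 & f u3 = g x3] by split; apply: liftK.
rewrite (@lbrE (brV u1 u2) (alV u3)) ?f_br ?f_al ?g_br ?g_al ?P1 ?P2 ?P3 //.
rewrite (@lbrE (brV u1 u3) (alV u2)) ?f_br ?f_al ?g_br ?g_al ?P1 ?P2 ?P3 //.
rewrite (@lbrE (alV u1) (brV u2 u3)) ?f_br ?f_al ?g_br ?g_al ?P1 ?P2 ?P3 //.
by rewrite (hl_leibniz HV) addrC addrACA subrr addNr addr0.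
Qed.

Lemma stable_kills h : uce_stable brV alV brW alW f h -> kills_kerU h.
Proof.
move=> [S _] t Ht; have [t' [Ht' E]] := S t Ht.
have := lbr_uce_eq (hom_id brW alW) E; rewrite !fseval_tmap /= /geval => ->.
by rewrite -(proj2 Ht'); apply: fseval_ext => a b; apply: lbrE.
Qed.

Lemma stable_kills_inv h hinv : is_hom brW alW brW alW hinv -> cancel h hinv ->
  uce_stable brV alV brW alW f h -> kills_kerU hinv.
Proof.
move=> Hi hK [_ S] t Ht; have [s [Hs E]] := S t Ht.
have := lbr_uce_eq Hi E; rewrite !fseval_tmap /= /geval => ->.
by rewrite -(proj2 Hs); apply: fseval_ext => a b; rewrite !hK; apply: lbrE.
Qed.

(* A lift th of h carries Ker U_alpha' onto itself, so uce_alpha(h)(C) = C. *)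
Lemma lift_stable h th : is_aut brV alV th -> lifts th h ->
  uce_stable brV alV brW alW f h.
Proof.
move=> Ha Hl; have [thi [[il ib ia] c1 c2]] := aut_inverse Ha.
have [[tl tb ta] _] := Ha.
have tmap_ker g : is_hom brV alV brV alV g -> forall s, in_ker_U brV alV s ->
    in_ker_U brV alV (tmap g s).
  move=> [gl gb ga] s [Hs1 Hs2]; split.
    by apply: in_uce_tmap => // x; exists (g x); rewrite ga.
  rewrite -/(fseval brV _) fseval_tmap -(lin0 gl) -Hs2 (linear_fseval _ _ gl).
  by apply: fseval_ext => a b; rewrite gb.
split=> [s Hs | t Ht].
- exists (tmap th s); split; first exact: tmap_ker.
  have -> : tmap f (tmap th s) = tmap h (tmap f s).
    by rewrite /tmap -!map_comp; apply: eq_map => e /=; rewrite !Hl.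
  exact: uce_eq_refl.
- exists (tmap thi t); split; first exact: tmap_ker.
  have -> : tmap h (tmap f (tmap thi t)) = tmap f t.
    by rewrite /tmap -!map_comp; apply: eq_map => e /=; rewrite -!Hl !c2.
  exact: uce_eq_refl.
Qed.

(* Conversely, if uce_alpha(h)(C) = C then theta h is an automorphism lifting h,
   with inverse theta h^-1. *)
Lemma stable_lift h : is_aut brW alW h -> uce_stable brV alV brW alW f h ->
  exists th, is_aut brV alV th /\ lifts th h.
Proof.
move=> Ha St; have [hi [Hi c1 c2]] := aut_inverse Ha; have [Hh _] := Ha.
have T := theta_hom Hh (stable_kills St).
have Ti := theta_hom Hi (stable_kills_inv Hi c1 St).
have L := theta_lifts Hh.
have Li := theta_lifts Hi.
exists (theta h); split => //; split => //; exists (theta hi).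
- by apply: (hom_unique (hom_comp Ti T) (hom_id _ _)) => x /=; rewrite Li L c1.
- by apply: (hom_unique (hom_comp T Ti) (hom_id _ _)) => x /=; rewrite L Li c2.
Qed.

Lemma lift_preserves_ker h th : is_aut brW alW h -> is_aut brV alV th ->
  lifts th h -> preserves_ker f th.
Proof.
move=> [[hl _ _] [hi c1 c2]] Ha Hl; have [thi [_ d1 d2]] := aut_inverse Ha.
split=> [x fx | y fy]; first by rewrite Hl fx (lin0 hl).
exists (thi y); split => //.
by rewrite -(c1 (f (thi y))) -Hl d2 fy -{1}(lin0 hl) c1.
Qed.

Lemma aut_descends g : is_aut brV alV g -> preserves_ker f g ->
  exists h, is_aut brW alW h /\ lifts g h.
Proof.
move=> Ag [gk gk2]; have [gi [[il ib ia] c1 c2]] := aut_inverse Ag.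
have [[gl gb ga] _] := Ag.
have gik y : f y = 0 -> f (gi y) = 0 by move/gk2=> [x [fx <-]]; rewrite c1.
have descent (d : V -> V) : linear d -> (forall x, f x = 0 -> f (d x) = 0) ->
    forall u, f (d (lift (f u))) = f (d u).
  move=> dl dk u; apply/eqP; rewrite -subr_eq0 -(linB f_lin) -(linB dl).
  by rewrite dk // (linB f_lin) liftK subrr.
pose h w := f (g (lift w)).
have Lg : lifts g h by move=> x; rewrite /h descent.
exists h; split => //; split.
- split.
  + by move=> k a b; rewrite -{1}[a]liftK -{1}[b]liftK -f_lin -Lg gl f_lin.
  + by move=> a b; rewrite -{1}[a]liftK -{1}[b]liftK -f_br -Lg gb f_br.
  + by move=> a; rewrite -{1}[a]liftK -f_al -Lg ga f_al.
- exists (fun w => f (gi (lift w))) => w; rewrite /h.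
  + by rewrite descent // c1 liftK.
  + by rewrite descent // c2 liftK.
Qed.

Definition Theta (h : W -> W) : V -> V :=
  epsilon (inhabits id) (fun th => is_aut brV alV th /\ lifts th h).

Lemma Theta_spec h : is_aut brW alW h -> uce_stable brV alV brW alW f h ->
  [/\ is_aut brV alV (Theta h), preserves_ker f (Theta h) & lifts (Theta h) h].
Proof.
move=> Ha St; have [T L] := epsilon_spec (inhabits id) _ (stable_lift Ha St).
by split => //; apply: lift_preserves_ker Ha T L.
Qed.

Lemma lift_unique h th1 th2 : is_aut brV alV th1 -> is_aut brV alV th2 ->
  lifts th1 h -> lifts th2 h -> th1 =1 th2.
Proof. by move=> [H1 _] [H2 _] L1 L2; apply: hom_unique H1 H2 _ => x; rewrite L1 L2. Qed.

Lemma Theta_comp h1 h2 :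
  is_aut brW alW h1 -> uce_stable brV alV brW alW f h1 ->
  is_aut brW alW h2 -> uce_stable brV alV brW alW f h2 ->
  uce_stable brV alV brW alW f (h1 \o h2) /\ Theta (h1 \o h2) =1 Theta h1 \o Theta h2.
Proof.
move=> A1 S1 A2 S2; have [T1 _ L1] := Theta_spec A1 S1; have [T2 _ L2] := Theta_spec A2 S2.
have T12 := aut_comp T1 T2.
have L12 : lifts (Theta h1 \o Theta h2) (h1 \o h2) by move=> x /=; rewrite L1 L2.
have S12 := lift_stable T12 L12; split => //.
by have [T _ L] := Theta_spec (aut_comp A1 A2) S12; apply: lift_unique T T12 L L12.
Qed.

Lemma Theta_inj h1 h2 :
  is_aut brW alW h1 -> uce_stable brV alV brW alW f h1 ->
  is_aut brW alW h2 -> uce_stable brV alV brW alW f h2 ->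
  Theta h1 =1 Theta h2 -> h1 =1 h2.
Proof.
move=> A1 S1 A2 S2 E w; have [_ _ L1] := Theta_spec A1 S1; have [_ _ L2] := Theta_spec A2 S2.
by rewrite -(liftK w) -L1 -L2 E.
Qed.

Lemma Theta_onto g : is_aut brV alV g -> preserves_ker f g ->
  exists h, [/\ is_aut brW alW h, uce_stable brV alV brW alW f h & Theta h =1 g].
Proof.
move=> Ag Pg; have [h [Ah Lg]] := aut_descends Ag Pg.
have Sh := lift_stable Ag Lg; exists h; split => //.
by have [T _ L] := Theta_spec Ah Sh; apply: lift_unique T Ag L Lg.
Qed.

End Cover.

Theorem theorem4p3 (K : fieldType) (V W : lmodType K)
    (brV : V -> V -> V) (alV : V -> V) (brW : W -> W -> W) (alW : W -> W)
    (f : V -> W) :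
  HomLeibniz brV alV -> HomLeibniz brW alW ->
  alpha_cover brV alV brW alW f ->
  (* existence of a lift iff uce_alpha(h)(C) = C *)
  (forall h, is_aut brW alW h ->
     (exists th, is_aut brV alV th /\ (forall x, f (th x) = h (f x))) <->
     uce_stable brV alV brW alW f h) /\
  (* uniqueness and Ker f-invariance of the lift *)
  (forall h, is_aut brW alW h -> uce_stable brV alV brW alW f h ->
     forall th1 th2, is_aut brV alV th1 -> is_aut brV alV th2 ->
     (forall x, f (th1 x) = h (f x)) -> (forall x, f (th2 x) = h (f x)) ->
     th1 =1 th2) /\
  (forall h th, is_aut brW alW h -> uce_stable brV alV brW alW f h ->
     is_aut brV alV th -> (forall x, f (th x) = h (f x)) ->
     preserves_ker f th) /\
  (* Theta : h |-> theta_h is a group isomorphism *)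
  (exists Theta : (W -> W) -> (V -> V),
     [/\ forall h, is_aut brW alW h -> uce_stable brV alV brW alW f h ->
           [/\ is_aut brV alV (Theta h), preserves_ker f (Theta h) &
               forall x, f (Theta h x) = h (f x)],
         forall h1 h2, is_aut brW alW h1 -> uce_stable brV alV brW alW f h1 ->
           is_aut brW alW h2 -> uce_stable brV alV brW alW f h2 ->
           uce_stable brV alV brW alW f (h1 \o h2) /\
           Theta (h1 \o h2) =1 Theta h1 \o Theta h2,
         forall h1 h2, is_aut brW alW h1 -> uce_stable brV alV brW alW f h1 ->
           is_aut brW alW h2 -> uce_stable brV alV brW alW f h2 ->
           Theta h1 =1 Theta h2 -> h1 =1 h2 &
         forall g, is_aut brV alV g -> preserves_ker f g ->
           exists h, [/\ is_aut brW alW h, uce_stable brV alV brW alW f h &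
                        Theta h =1 g]]).
Proof.
move=> HV _ Hc; split; [|split; [|split]].
- move=> h Ha; split=> [[th [Hth Hl]]|]; first exact: lift_stable Hth Hl.
  exact: stable_lift HV Hc h Ha.
- by move=> h _ _ th1 th2 T1 T2 L1 L2; apply: (lift_unique HV Hc T1 T2 L1 L2).
- move=> h th Ha _ Hth Hl; exact: lift_preserves_ker Ha Hth Hl.
- exists (Theta brV alV f); split.
  + exact: Theta_spec HV Hc.
  + exact: Theta_comp HV Hc.
  + exact: Theta_inj HV Hc.
  + exact: Theta_onto HV Hc.
Qed.
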